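(* For $-2<\psi<2$ let $E_\psi$ be the complex elliptic curve $y^2=4x^3-12x+4\psi$, and let $\delta_2\in H_1(E_\psi,\Z)$ be the class of the compact connected component (oval) of $E_\psi\cap\R^2$, oriented so that $\int_{\delta_2}\frac{dx}{y}>0$. Then $$\int_{\delta_2}\frac{dx}{y}=\frac{\pi}{\sqrt3}F\Big(\frac16,\frac56,1\Big|\frac{\psi+2}4\Big),\qquad \int_{\delta_2}\frac{xdx}{y}=-\frac{\pi}{\sqrt3}F\Big(-\frac16,\frac76,1\Big|\frac{\psi+2}4\Big),$$ where $F(a,b,c|z)=\sum_{n\ge0}\frac{(a)_n(b)_n}{(c)_n\,n!}z^n$ is the Gauss hypergeometric function and $(a)_n=a(a+1)\cdots(a+n-1)$. *)

From Stdlib Require Import Reals Arith Factorial.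
Open Scope R_scope.

Fixpoint poch (a : R) (n : nat) : R :=
  match n with
  | O => 1
  | S k => poch a k * (a + INR k)
  end.

Definition hyp_term (a b c z : R) (n : nat) : R :=
  poch a n * poch b n / (poch c n * INR (fact n)) * z ^ n.

Definition hyp2F1 (a b c z S : R) : Prop :=
  infinite_sum (hyp_term a b c z) S.

(* The cubic 4x^3 - 12x + 4psi, so that E_psi : y^2 = cubic psi x. *)
Definition cubic (psi x : R) : R := 4 * x ^ 3 - 12 * x + 4 * psi.

Definition improper_int (f : R -> R) (a b L : R) : Prop :=
  forall eps, eps > 0 -> exists d, d > 0 /\
    forall u v, a < u < a + d -> b - d < v < b ->
      exists pr : Riemann_integrable f u v, Rabs (RiemannInt pr - L) < eps.

(* Put [r^2 = (psi + 2) / 4] and substitute [x = 2 cos (2/3 (pi - theta))] with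
   [sin theta = r sin t], [-pi/2 < t < pi/2].  Since [cos 3y = 4 cos^3 y - 3 cos y], this
   makes [y^2 = cubic psi x = 16 r^2 cos^2 t]; it maps the parameter interval increasingly onto
   the oval and turns [dx/y] and [x dx/y] into [2/3 sin (k (pi - theta)) / cos theta dt] for
   [k = 2/3] and [k = 4/3].  Expanding [sin (k pi - k theta)], the part in [sin (k theta)] is
   odd in [t] and integrates to zero, while [cos (k theta) / cos theta] is
   F((1+k)/2, (1-k)/2, 1/2 | r^2 sin^2 t), as both sides satisfy the same hypergeometric ODE.
   Integrating this series term by term against Wallis' integrals
   [int sin^(2n) = pi (1/2)_n / n!] gives [pi F((1-k)/2, (1+k)/2, 1 | r^2)]. *)

From Stdlib Require Import Reals Lra Lia Psatz Factorial.
From Coquelicot Require Import Coquelicot.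
Open Scope R_scope.

Lemma poch_pos a n : 0 < a -> 0 < poch a n.
Proof.
  intros Ha; induction n as [|n IH]; simpl; [lra|].
  pose proof (pos_INR n); apply Rmult_lt_0_compat; lra.
Qed.

Lemma poch_1 n : poch 1 n = INR (fact n).
Proof.
  induction n as [|n IH]; simpl poch; [reflexivity|].
  rewrite IH, fact_simpl, mult_INR, S_INR; ring.
Qed.

Lemma continuous_of_ex_derive (f : R -> R) x : ex_derive f x -> continuous f x.
Proof. exact (ex_derive_continuous (K := R_AbsRing) (V := R_NormedModule) f x). Qed.

Lemma eq_of_sub_mul_zero x y k e : e = 0 -> x - y = k * e -> x = y.
Proof. intros -> H; lra. Qed.

Lemma Rabs_sin_sqr_lt_1 b : -(PI/2) < b < PI/2 -> Rabs (sin b ^ 2) < 1.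
Proof.
  intros Hb; assert (0 < cos b) by (apply cos_gt_0; lra).
  pose proof (sin2_cos2 b); unfold Rsqr in *.
  rewrite Rabs_right by nra; nra.
Qed.

Lemma is_RInt_sin_pow_even n :
  is_RInt (fun t => sin t ^ (2 * n)) (-(PI/2)) (PI/2) (PI * poch (1/2) n / INR (fact n)).
Proof.
  induction n as [|n IH].
  - replace (PI * poch (1/2) 0 / INR (fact 0)) with (scal (PI/2 - - (PI/2)) 1)
      by (compute -[PI]; field).
    apply (is_RInt_const (V := R_NormedModule)).
  - (* [(2n+1) sin^(2n) - (2n+2) sin^(2n+2)] is the derivative of [sin^(2n+1) cos],
       which vanishes at both ends *)
    assert (Hred : is_RInt (fun t => (2 * INR n + 1) * sin t ^ (2 * n) - (2 * INR n + 2) * sin t ^ (2 * S n))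
                     (-(PI/2)) (PI/2) 0).
    { replace 0 with (minus (sin (PI/2) ^ (2*n+1) * cos (PI/2)) (sin (-(PI/2)) ^ (2*n+1) * cos (-(PI/2))))
        by (rewrite cos_neg, cos_PI2; compute -[PI sin cos pow]; ring).
      apply (is_RInt_derive (fun t => sin t ^ (2 * n + 1) * cos t)).
      - intros x _; auto_derive; [exact I|].
        replace (n + (n + 0) + 1)%nat with (S (2 * n)) by lia.
        replace (2 * S n)%nat with (S (S (2 * n))) by lia.
        pose proof (sin2_cos2 x) as Hpyth; unfold Rsqr in Hpyth.
        rewrite S_INR, mult_INR; simpl pow; simpl INR.
        set (P := sin x ^ (n + (n + 0))).
        apply Rminus_diag_uniq.
        transitivity ((2 * INR n + 1) * P * (sin x * sin x + cos x * cos x - 1)); [ring|].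
        rewrite Hpyth; ring.
      - intros x _; apply continuous_of_ex_derive; auto_derive; exact I. }
    pose proof (pos_INR n); pose proof (INR_fact_lt_0 n).
    pose proof (is_RInt_scal _ _ _ (/ (2 * INR n + 2)) _
      (is_RInt_minus _ _ _ _ _ _ (is_RInt_scal _ _ _ (2 * INR n + 1) _ IH) Hred)) as Hlin.
    replace (PI * poch (1/2) (S n) / INR (fact (S n))) with
      (scal (/ (2 * INR n + 2)) (minus (scal (2 * INR n + 1) (PI * poch (1/2) n / INR (fact n))) 0)).
    + revert Hlin; apply is_RInt_ext; intros x _.
      compute -[sin pow INR]; field; lra.
    + simpl poch; rewrite fact_simpl, mult_INR, S_INR.
      compute -[PI poch INR fact]; field; lra.
Qed.

Section CosMultiple.

Variable a : R.
Hypothesis Ha : a * a <= 3.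

(* [cosF t] is F((1+a)/2, (1-a)/2, 1/2 | t), the function with
   [cos (a * b) = cosF (sin b ^ 2) * cos b] ([cos_mul_cosF]). *)
Definition cosF_coef (n : nat) : R :=
  poch ((1 + a) / 2) n * poch ((1 - a) / 2) n / (poch (1/2) n * INR (fact n)).

Definition cosF (t : R) : R := PSeries cosF_coef t.
Definition cosF' (t : R) : R := PSeries (PS_derive cosF_coef) t.
Definition cosF'' (t : R) : R := PSeries (PS_derive (PS_derive cosF_coef)) t.

Lemma cosF_coef_0 : cosF_coef 0 = 1.
Proof. unfold cosF_coef; simpl; field. Qed.

Lemma cosF_coef_S n : cosF_coef (S n) =
  cosF_coef n * (((1 + a) / 2 + INR n) * ((1 - a) / 2 + INR n)) / ((1/2 + INR n) * (INR n + 1)).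
Proof.
  unfold cosF_coef; simpl poch; rewrite fact_simpl, mult_INR, S_INR.
  pose proof (poch_pos (1/2) n ltac:(lra)); pose proof (INR_fact_lt_0 n); pose proof (pos_INR n).
  field; repeat split; lra.
Qed.

Lemma Rabs_cosF_coef_le_1 n : Rabs (cosF_coef n) <= 1.
Proof.
  induction n as [|n IH]; [rewrite cosF_coef_0, Rabs_R1; lra|].
  rewrite cosF_coef_S; pose proof (pos_INR n).
  set (D := (1/2 + INR n) * (INR n + 1)).
  set (N := ((1 + a) / 2 + INR n) * ((1 - a) / 2 + INR n)).
  assert (HD : 0 < D) by (unfold D; nra).
  (* the hypothesis [a * a <= 3] is exactly [-D <= N] at [n = 0] *)
  assert (HN : Rabs N <= D) by (apply Rabs_le; unfold N, D; split; nra).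
  unfold Rdiv; rewrite !Rabs_mult, Rabs_inv, (Rabs_right D) by lra.
  pose proof (Rabs_pos (cosF_coef n)); pose proof (Rabs_pos N).
  apply Rmult_le_reg_r with D; [exact HD|].
  rewrite Rmult_assoc, Rinv_l by lra; nra.
Qed.

Lemma CV_radius_cosF_coef t : Rabs t < 1 -> Rbar_lt (Rabs t) (CV_radius cosF_coef).
Proof.
  intros Ht; destruct (CV_radius_bounded cosF_coef) as [Hub _].
  apply Rbar_lt_le_trans with (Finite ((Rabs t + 1) / 2)); [simpl; lra|].
  apply Hub; exists 1; intro n.
  rewrite Rabs_mult, <- RPow_abs.
  pose proof (Rabs_cosF_coef_le_1 n); pose proof (Rabs_pos (cosF_coef n)); pose proof (Rabs_pos t).
  assert (0 <= Rabs ((Rabs t + 1) / 2) ^ n <= 1).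
  { rewrite (Rabs_right ((Rabs t + 1) / 2)) by lra.
    split; [apply pow_le; lra|apply Rle_trans with (1 ^ n); [apply pow_incr; lra|rewrite pow1; lra]]. }
  nra.
Qed.

Lemma CV_radius_cosF_coef' t : Rabs t < 1 ->
  Rbar_lt (Rabs t) (CV_radius (PS_derive cosF_coef)).
Proof. rewrite CV_radius_derive; apply CV_radius_cosF_coef. Qed.

Lemma CV_radius_cosF_coef'' t : Rabs t < 1 ->
  Rbar_lt (Rabs t) (CV_radius (PS_derive (PS_derive cosF_coef))).
Proof. rewrite !CV_radius_derive; apply CV_radius_cosF_coef. Qed.

Lemma is_derive_cosF t : Rabs t < 1 -> is_derive cosF t (cosF' t).
Proof. intros; apply is_derive_PSeries, CV_radius_cosF_coef; assumption. Qed.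

Lemma is_derive_cosF' t : Rabs t < 1 -> is_derive cosF' t (cosF'' t).
Proof. intros; apply is_derive_PSeries, CV_radius_cosF_coef'; assumption. Qed.

Lemma Derive_cosF t : Rabs t < 1 -> Derive (fun x : R => cosF x) t = cosF' t.
Proof. intros; apply is_derive_unique, is_derive_cosF; assumption. Qed.

Lemma Derive_cosF' t : Rabs t < 1 -> Derive (fun x : R => cosF' x) t = cosF'' t.
Proof. intros; apply is_derive_unique, is_derive_cosF'; assumption. Qed.

Lemma cosF_hypergeometric_ode t : Rabs t < 1 ->
  t * (1 - t) * cosF'' t + (1/2 - 2 * t) * cosF' t - (1 - a * a) / 4 * cosF t = 0.
Proof.
  intros Ht.
  pose proof (CV_radius_inside _ _ (CV_radius_cosF_coef t Ht)) as E0.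
  pose proof (CV_radius_inside _ _ (CV_radius_cosF_coef' t Ht)) as E1.
  pose proof (CV_radius_inside _ _ (CV_radius_cosF_coef'' t Ht)) as E2.
  unfold cosF, cosF', cosF''.
  set (q := cosF_coef) in *; set (q1 := PS_derive q) in *; set (q2 := PS_derive q1) in *.
  assert (Hscal : forall (c : R) (b : nat -> R), ex_pseries b t -> ex_pseries (PS_scal c b) t)
    by (intros; apply ex_pseries_scal; [apply Rmult_comm|assumption]).
  pose proof (ex_pseries_incr_1 _ _ E1) as I1.
  pose proof (ex_pseries_incr_1 _ _ E2) as I2.
  pose proof (ex_pseries_incr_1 _ _ I2) as I22.
  transitivity (PSeries (PS_plus (PS_incr_1 q2) (PS_plus (PS_scal (-1) (PS_incr_1 (PS_incr_1 q2)))
     (PS_plus (PS_scal (1/2) q1) (PS_plus (PS_scal (-2) (PS_incr_1 q1))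
       (PS_scal (-((1 - a * a) / 4)) q))))) t).
  - rewrite !PSeries_plus; auto 6 using ex_pseries_plus.
    rewrite !PSeries_scal, !PSeries_incr_1; ring.
  - (* coefficientwise, this is the recurrence [cosF_coef_S] *)
    rewrite <- (PSeries_const_0 t); apply PSeries_ext; intro n.
    unfold PS_plus, PS_scal, PS_incr_1, q2, q1, PS_derive, plus, scal, mult, zero; cbn -[INR cosF_coef].
    unfold q; destruct n as [|[|m]].
    + rewrite cosF_coef_S, cosF_coef_0; simpl INR; field.
    + rewrite (cosF_coef_S 1), cosF_coef_S, cosF_coef_0; simpl INR; field.
    + rewrite (cosF_coef_S (S (S m))), !S_INR; pose proof (pos_INR m); field; lra.
Qed.

Lemma Un_cv_cosF x : Rabs x < 1 ->
  Un_cv (fun n => sum_f_R0 (fun k => cosF_coef k * x ^ k) n) (cosF x).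
Proof.
  intros Hx; apply is_series_Reals.
  pose proof (PSeries_correct _ _ (CV_radius_inside _ _ (CV_radius_cosF_coef x Hx))) as H.
  revert H; apply is_series_ext; intro n.
  rewrite pow_n_pow; compute -[cosF_coef pow]; ring.
Qed.

Lemma Rabs_cosF_sub_partial_sum_le x z N : 0 <= z < 1 -> Rabs x <= z ->
  Rabs (cosF x - sum_f_R0 (fun k => cosF_coef k * x ^ k) N) <= z ^ S N / (1 - z).
Proof.
  intros Hz Hx.
  assert (Hgeom : Un_cv (fun n => sum_f_R0 (fun k => z ^ k) n) (/ (1 - z))).
  { intros eps Heps; destruct (GP_infinite z ltac:(rewrite Rabs_right; lra) eps Heps) as [N0 HN].
    exists N0; intros n Hn; rewrite (sum_eq _ (fun k => 1 * z ^ k)) by (intros; ring).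
    apply HN, Hn. }
  pose proof (sum_maj1 (fun k y => cosF_coef k * y ^ k) (fun k => z ^ k) x (cosF x) (/ (1 - z)) N
    (Un_cv_cosF x ltac:(lra)) Hgeom) as Hmaj.
  unfold SP in Hmaj; rewrite tech3 in Hmaj by lra.
  replace (z ^ S N / (1 - z)) with (/ (1 - z) - (1 - z ^ S N) / (1 - z)) by (field; lra).
  apply Hmaj; intro n; rewrite Rabs_mult, <- RPow_abs.
  pose proof (Rabs_cosF_coef_le_1 n); pose proof (Rabs_pos (cosF_coef n)).
  assert (Rabs x ^ n <= z ^ n) by (apply pow_incr; split; [apply Rabs_pos|assumption]).
  pose proof (pow_le (Rabs x) n (Rabs_pos x)).
  nra.
Qed.

Lemma Rabs_mul_sin_sqr_le z t : 0 <= z -> Rabs (z * sin t ^ 2) <= z.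
Proof.
  intros Hz; pose proof (sin2_cos2 t); unfold Rsqr in *.
  rewrite Rabs_right by nra; nra.
Qed.

Lemma continuous_cosF_mul_sin_sqr z t : 0 <= z < 1 ->
  continuous (fun t => cosF (z * sin t ^ 2)) t.
Proof.
  intros Hz; pose proof (Rabs_mul_sin_sqr_le z t ltac:(lra)).
  apply continuous_of_ex_derive; auto_derive.
  exists (cosF' (z * sin t ^ 2)); apply is_derive_cosF; lra.
Qed.

Lemma is_RInt_cosF_term z k :
  is_RInt (fun t => cosF_coef k * (z * sin t ^ 2) ^ k) (-(PI/2)) (PI/2)
    (PI * hyp_term ((1 - a) / 2) ((1 + a) / 2) 1 z k).
Proof.
  pose proof (is_RInt_scal _ _ _ (cosF_coef k * z ^ k) _ (is_RInt_sin_pow_even k)) as H.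
  replace (PI * hyp_term _ _ 1 z k) with (scal (cosF_coef k * z ^ k) (PI * poch (1/2) k / INR (fact k))).
  - revert H; apply is_RInt_ext; intros x _.
    rewrite Rpow_mult_distr, pow_mult; compute -[cosF_coef pow sin]; ring.
  - unfold hyp_term, cosF_coef; rewrite poch_1.
    pose proof (poch_pos (1/2) k ltac:(lra)); pose proof (INR_fact_lt_0 k).
    unfold scal; simpl; unfold mult; simpl; field; lra.
Qed.

Lemma is_RInt_cosF_partial_sum z N :
  is_RInt (fun t => sum_f_R0 (fun k => cosF_coef k * (z * sin t ^ 2) ^ k) N) (-(PI/2)) (PI/2)
    (PI * sum_f_R0 (hyp_term ((1 - a) / 2) ((1 + a) / 2) 1 z) N).
Proof.
  induction N as [|N IH]; [apply is_RInt_cosF_term|].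
  rewrite tech5, Rmult_plus_distr_l.
  exact (is_RInt_plus _ _ _ _ _ _ IH (is_RInt_cosF_term z (S N))).
Qed.

Lemma hyp2F1_RInt_cosF z : 0 <= z < 1 ->
  hyp2F1 ((1 - a) / 2) ((1 + a) / 2) 1 z
    (RInt (fun t => cosF (z * sin t ^ 2)) (-(PI/2)) (PI/2) / PI).
Proof.
  intros Hz eps Heps; pose proof PI_RGT_0.
  destruct (pow_lt_1_zero z ltac:(rewrite Rabs_right; lra) (eps * (1 - z))) as [N HN]; [nra|].
  exists N; intros n Hn.
  set (F := fun t => cosF (z * sin t ^ 2)).
  set (P := fun t => sum_f_R0 (fun k => cosF_coef k * (z * sin t ^ 2) ^ k) n).
  set (Psum := sum_f_R0 (hyp_term ((1 - a) / 2) ((1 + a) / 2) 1 z) n).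
  assert (EF : ex_RInt F (-(PI/2)) (PI/2)).
  { apply (ex_RInt_continuous (V := R_CompleteNormedModule)); intros.
    apply continuous_cosF_mul_sin_sqr, Hz. }
  assert (HFP : is_RInt (fun t => F t - P t) (-(PI/2)) (PI/2) (RInt F (-(PI/2)) (PI/2) - PI * Psum))
    by exact (is_RInt_minus _ _ _ _ _ _ (RInt_correct _ _ _ EF) (is_RInt_cosF_partial_sum z n)).
  assert (Hbound : Rabs (RInt F (-(PI/2)) (PI/2) - PI * Psum) <= PI * (z ^ S n / (1 - z))).
  { rewrite <- (is_RInt_unique _ _ _ _ HFP).
    replace (PI * (z ^ S n / (1 - z))) with ((PI/2 - - (PI/2)) * (z ^ S n / (1 - z))) by (field; lra).
    apply abs_RInt_le_const; [lra|eexists; exact HFP|].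
    intros t _; apply Rabs_cosF_sub_partial_sum_le, Rabs_mul_sin_sqr_le; lra. }
  specialize (HN (S n) ltac:(lia)); rewrite Rabs_right in HN by (apply Rle_ge, pow_le; lra).
  assert (z ^ S n / (1 - z) < eps) by (apply Rlt_div_l; lra).
  unfold R_dist; fold Psum.
  replace (Psum - RInt F (-(PI/2)) (PI/2) / PI) with (- (RInt F (-(PI/2)) (PI/2) - PI * Psum) / PI)
    by (field; lra).
  unfold Rdiv; rewrite Rabs_mult, Rabs_Ropp, Rabs_inv, (Rabs_right PI) by lra.
  apply Rmult_lt_reg_r with PI; [lra|].
  rewrite Rmult_assoc, Rinv_l, Rmult_1_r by lra; nra.
Qed.


Hypothesis Ha0 : a <> 0.

(* [V = - U' / a]; the hypergeometric ODE gives [V' = a U], so [(U, V)] and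
   [(cos (a b), sin (a b))] solve the same linear system with the same initial value. *)
Let U (b : R) : R := cosF (sin b ^ 2) * cos b.
Let V (b : R) : R := - / a * (2 * sin b * cos b ^ 2 * cosF' (sin b ^ 2) - sin b * cosF (sin b ^ 2)).

Lemma is_derive_cosF_sin_cos b : -(PI/2) < b < PI/2 -> is_derive U b (- a * V b).
Proof.
  intros Hb; pose proof (Rabs_sin_sqr_lt_1 b Hb).
  unfold U, V; auto_derive.
  - exists (cosF' (sin b ^ 2)); apply is_derive_cosF; assumption.
  - change (sin b * (sin b * 1)) with (sin b ^ 2).
    rewrite Derive_cosF by assumption; field; assumption.
Qed.

Lemma is_derive_cosF_sin_sin b : -(PI/2) < b < PI/2 -> is_derive V b (a * U b).
Proof.
  intros Hb; pose proof (Rabs_sin_sqr_lt_1 b Hb) as Ht.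
  pose proof (cosF_hypergeometric_ode _ Ht) as Hode.
  pose proof (sin2_cos2 b) as Hpyth; unfold Rsqr in Hpyth.
  unfold U, V; auto_derive.
  - split; [exists (cosF'' (sin b ^ 2)); apply is_derive_cosF'; assumption|].
    split; [exists (cosF' (sin b ^ 2)); apply is_derive_cosF; assumption|exact I].
  - change (sin b * (sin b * 1)) with (sin b ^ 2).
    rewrite Derive_cosF, Derive_cosF' by assumption.
    set (s := sin b) in *; set (c := cos b) in *.
    set (F0 := cosF (s ^ 2)) in *; set (F1 := cosF' (s ^ 2)) in *; set (F2 := cosF'' (s ^ 2)) in *.
    (* modulo [s^2 + c^2 = 1] the difference is a multiple of the ODE at [s^2] *)
    apply (eq_of_sub_mul_zero _ _ (- / a * c * (2 * F1 + 4 * s ^ 2 * F2)) (s * s + c * c - 1));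
      [lra|].
    transitivity (- 4 / a * c * (s ^ 2 * (1 - s ^ 2) * F2 + (1/2 - 2 * s ^ 2) * F1 - (1 - a * a) / 4 * F0)
      + - / a * c * (2 * F1 + 4 * s ^ 2 * F2) * (s * s + c * c - 1)); [field; assumption|].
    rewrite Hode; ring.
Qed.

Lemma cos_mul_cosF b : -(PI/2) < b < PI/2 -> cos (a * b) = cosF (sin b ^ 2) * cos b.
Proof.
  intros Hb.
  set (E := fun x => (U x - cos (a * x)) ^ 2 + (V x - sin (a * x)) ^ 2).
  assert (HE : forall x, -(PI/2) < x < PI/2 -> is_derive E x 0).
  { intros x Hx; pose proof (is_derive_cosF_sin_cos x Hx) as HU.
    pose proof (is_derive_cosF_sin_sin x Hx) as HV.
    unfold E; auto_derive.
    - repeat split; solve [exists (- a * V x); exact HU | exists (a * U x); exact HV].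
    - rewrite (is_derive_unique (fun y : R => U y) _ _ HU), (is_derive_unique (fun y : R => V y) _ _ HV); ring. }
  assert (HE0 : E 0 = 0).
  { unfold E, U, V, cosF; rewrite sin_0, cos_0, Rmult_0_r, sin_0, cos_0.
    replace (0 ^ 2) with 0 by ring; rewrite PSeries_0, cosF_coef_0; ring. }
  assert (Hin : forall x, Rmin 0 b <= x <= Rmax 0 b -> -(PI/2) < x < PI/2).
  { pose proof PI_RGT_0; unfold Rmin, Rmax; intros x; destruct Rle_dec; lra. }
  destruct (MVT_gen E 0 b (fun _ => 0)) as [c [_ HEc]].
  - intros x Hx; apply HE, Hin; lra.
  - intros x Hx; apply derivable_continuous_pt; exists 0; apply is_derive_Reals, HE, Hin, Hx.
  - rewrite HE0, Rmult_0_l in HEc; unfold E in HEc.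
    pose proof (pow2_ge_0 (U b - cos (a * b))); pose proof (pow2_ge_0 (V b - sin (a * b))).
    assert (U b - cos (a * b) = 0) by nra.
    unfold U in *; lra.
Qed.

End CosMultiple.

Lemma IVT_incr_open (g : R -> R) a b y : (forall t, continuous g t) -> a < b ->
  g a < y < g b -> exists t, a < t < b /\ g t = y.
Proof.
  intros Hg Hab Hy.
  destruct (IVT_gen_consistent g a b y Hg) as [t [Ht Hgt]].
  { rewrite Rmin_left, Rmax_right; lra. }
  rewrite Rmin_left, Rmax_right in Ht by lra.
  exists t; split; [|exact Hgt].
  split; apply Rnot_le_lt; intro; assert (t = a \/ t = b) as [->| ->] by lra; lra.
Qed.

Lemma continuous_eps_delta (g : R -> R) x : continuous g x ->
  forall eps, 0 < eps -> exists d, 0 < d /\ forall y, Rabs (y - x) < d -> Rabs (g y - g x) < eps.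
Proof.
  intros Hg eps Heps.
  destruct (proj1 (filterlim_locally g (g x)) Hg (mkposreal eps Heps)) as [d Hd].
  exists d; split; [apply cond_pos|]; intros y Hy; apply (Hd y Hy).
Qed.

Section ImproperSubstitution.

Variables (f g dg h : R -> R) (p q : R).
Hypothesis Hpq : p < q.
Hypothesis Hg : forall t, is_derive g t (dg t).
Hypothesis Hdg : forall t, continuous dg t.
Hypothesis Hg_incr : forall u v, p <= u -> u < v -> v <= q -> g u < g v.
Hypothesis Hf : forall t, p < t < q -> continuous f (g t).
Hypothesis Hfh : forall t, p < t < q -> dg t * f (g t) = h t.
Hypothesis Hh : forall t, continuous h t.

Let continuous_g t : continuous g t.
Proof. apply continuous_of_ex_derive; exists (dg t); apply Hg. Qed.

Let ex_RInt_h u v : ex_RInt h u v.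
Proof. apply (ex_RInt_continuous (V := R_CompleteNormedModule)); intros; apply Hh. Qed.

Lemma RiemannInt_comp_interior u v : p < u -> u < v -> v < q ->
  exists pr : Riemann_integrable f (g u) (g v), RiemannInt pr = RInt h u v.
Proof.
  intros Hu Huv Hv.
  assert (Hgu : g u < g v) by (apply Hg_incr; lra).
  assert (Ef : ex_RInt f (g u) (g v)).
  { apply (ex_RInt_continuous (V := R_CompleteNormedModule)); intros x Hx.
    rewrite Rmin_left, Rmax_right in Hx by lra.
    destruct (Req_dec x (g u)) as [->|Hxu]; [apply Hf; lra|].
    destruct (Req_dec x (g v)) as [->|Hxv]; [apply Hf; lra|].
    destruct (IVT_incr_open g u v x continuous_g Huv ltac:(lra)) as [t [Ht <-]].
    apply Hf; lra. }
  exists (ex_RInt_Reals_0 _ _ _ Ef); rewrite <- RInt_Reals.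
  rewrite <- (RInt_comp (V := R_CompleteNormedModule) f g dg u v).
  - apply RInt_ext; intros x Hx; rewrite Rmin_left, Rmax_right in Hx by lra.
    apply Hfh; lra.
  - intros x Hx; rewrite Rmin_left, Rmax_right in Hx by lra; apply Hf; lra.
  - intros x _; split; [apply Hg|apply Hdg].
Qed.

Lemma improper_int_comp : improper_int f (g p) (g q) (RInt h p q).
Proof.
  set (Phi := fun t => RInt h p t).
  assert (HPhi : forall t, continuous Phi t).
  { intro t; apply (continuous_RInt_1 (V := R_NormedModule) h p t).
    apply filter_forall; intro x; apply (RInt_correct (V := R_CompleteNormedModule)), ex_RInt_h. }
  assert (HPhi_p : Phi p = 0) by apply (RInt_point (V := R_CompleteNormedModule)).
  intros eps Heps.
  destruct (continuous_eps_delta Phi p (HPhi p) (eps / 2)) as [d1 [Hd1 H1]]; [lra|].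
  destruct (continuous_eps_delta Phi q (HPhi q) (eps / 2)) as [d2 [Hd2 H2]]; [lra|].
  set (d := Rmin (Rmin d1 d2) ((q - p) / 4)).
  assert (Hd : 0 < d /\ d <= d1 /\ d <= d2 /\ d <= (q - p) / 4)
    by (unfold d, Rmin; repeat destruct Rle_dec; lra).
  assert (g p < g (p + d)) by (apply Hg_incr; lra).
  assert (g (q - d) < g q) by (apply Hg_incr; lra).
  exists (Rmin (g (p + d) - g p) (g q - g (q - d))).
  split; [unfold Rmin; destruct Rle_dec; lra|].
  intros u v Hu Hv.
  destruct (IVT_incr_open g p (p + d) u continuous_g ltac:(lra)) as [tu [Htu <-]];
    [unfold Rmin in Hu; destruct Rle_dec in Hu; lra|].
  destruct (IVT_incr_open g (q - d) q v continuous_g ltac:(lra)) as [tv [Htv <-]];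
    [unfold Rmin in Hv; destruct Rle_dec in Hv; lra|].
  destruct (RiemannInt_comp_interior tu tv) as [pr Hpr]; [lra..|].
  exists pr; rewrite Hpr.
  assert (Htu' : Rabs (Phi tu - Phi p) < eps / 2) by (apply H1; rewrite Rabs_right; lra).
  assert (Htv' : Rabs (Phi tv - Phi q) < eps / 2) by (apply H2; rewrite Rabs_left; lra).
  assert (Hch : RInt h p tu + RInt h tu tv = RInt h p tv)
    by exact (RInt_Chasles (V := R_CompleteNormedModule) h p tu tv (ex_RInt_h _ _) (ex_RInt_h _ _)).
  unfold Phi in *; rewrite HPhi_p in Htu'.
  replace (RInt h tu tv - RInt h p q) with ((RInt h p tv - RInt h p q) - (RInt h p tu - 0)) by lra.
  eapply Rle_lt_trans; [apply Rabs_triang|]; rewrite Rabs_Ropp; lra.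
Qed.

End ImproperSubstitution.

Lemma cos_3mul x : cos (3 * x) = 4 * cos x ^ 3 - 3 * cos x.
Proof.
  replace (3 * x) with (2 * x + x) by ring; rewrite cos_plus, cos_2a, sin_2a.
  pose proof (sin2_cos2 x) as Hpyth; unfold Rsqr in Hpyth.
  apply (eq_of_sub_mul_zero _ _ (- 3 * cos x) (sin x * sin x + cos x * cos x - 1)); [lra|ring].
Qed.

Lemma is_RInt_odd (g : R -> R) c : (forall t, continuous g t) -> (forall t, g (- t) = - g t) ->
  is_RInt g (- c) c 0.
Proof.
  intros Hg Hodd.
  destruct (ex_RInt_continuous (V := R_CompleteNormedModule) g (- c) c) as [I HI];
    [intros; apply Hg|].
  assert (HI' : is_RInt g (- c) c (opp I)).
  { apply is_RInt_swap in HI; rewrite <- (Ropp_involutive c) in HI at 1.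
    apply is_RInt_comp_opp in HI; revert HI; apply is_RInt_ext; intros x _.
    rewrite Hodd; apply Ropp_involutive. }
  replace 0 with I; [exact HI|].
  pose proof (is_RInt_unique _ _ _ _ HI) as E; pose proof (is_RInt_unique _ _ _ _ HI') as E'.
  rewrite E in E'; change (opp I) with (- I) in E'; lra.
Qed.

Lemma is_derive_asin (y : R) : -1 < y < 1 -> is_derive asin y (1 / sqrt (1 - y²)).
Proof.
  intros Hy; apply is_derive_Reals.
  apply (derive_pt_eq_1 _ _ _ (derivable_pt_asin y Hy)), derive_pt_asin.
Qed.

Section OvalParametrisation.

Variable r : R.
Hypothesis Hr : 0 < r < 1.

Definition theta (t : R) : R := asin (r * sin t).
Definition xpar (t : R) : R := 2 * cos (2/3 * (PI - theta t)).
Definition dxpar (t : R) : R := 4/3 * sin (2/3 * (PI - theta t)) * (r * cos t / cos (theta t)).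

Let r_sin_bound t : -1 < r * sin t < 1.
Proof. pose proof (SIN_bound t); split; nra. Qed.

Lemma sin_theta t : sin (theta t) = r * sin t.
Proof. pose proof (r_sin_bound t); unfold theta; rewrite sin_asin; lra. Qed.

Lemma cos_theta t : cos (theta t) = sqrt (1 - (r * sin t)²).
Proof. pose proof (r_sin_bound t); unfold theta; rewrite cos_asin; lra. Qed.

Lemma cos_theta_gt_0 t : 0 < cos (theta t).
Proof. pose proof (r_sin_bound t); rewrite cos_theta; apply sqrt_lt_R0; unfold Rsqr; nra. Qed.

Lemma theta_opp t : theta (- t) = - theta t.
Proof. unfold theta; rewrite sin_neg, <- asin_opp; f_equal; ring. Qed.

Lemma is_derive_theta (t : R) : is_derive theta t (r * cos t / cos (theta t)).
Proof.
  pose proof (r_sin_bound t); pose proof (cos_theta_gt_0 t).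
  assert (Hrsin : is_derive (fun t => r * sin t) t (r * cos t)) by (auto_derive; [exact I|ring]).
  pose proof (is_derive_comp asin (fun t => r * sin t) t _ _ (is_derive_asin _ H) Hrsin) as Hcomp.
  replace (r * cos t / cos (theta t)) with (scal (r * cos t) (1 / sqrt (1 - (r * sin t)²)));
    [exact Hcomp|].
  rewrite <- cos_theta; compute -[cos sin theta]; field; lra.
Qed.

Lemma is_derive_xpar (t : R) : is_derive xpar t (dxpar t).
Proof.
  pose proof (cos_theta_gt_0 t).
  unfold xpar, dxpar; auto_derive.
  - exists (r * cos t / cos (theta t)); apply is_derive_theta.
  - rewrite (is_derive_unique (fun x : R => theta x) _ _ (is_derive_theta t)); unfold Rminus; field; lra.
Qed.

Lemma continuous_sin_mul_div_cos_theta (k c : R) t :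
  continuous (fun t => sin (k * (c - theta t)) / cos (theta t)) t.
Proof.
  pose proof (cos_theta_gt_0 t); apply continuous_of_ex_derive; auto_derive.
  repeat split; try (exists (r * cos t / cos (theta t)); apply is_derive_theta); lra.
Qed.

Lemma continuous_dxpar t : continuous dxpar t.
Proof.
  pose proof (cos_theta_gt_0 t); apply continuous_of_ex_derive; unfold dxpar; auto_derive.
  repeat split; try (exists (r * cos t / cos (theta t)); apply is_derive_theta); lra.
Qed.

Lemma dxpar_gt_0 t : -(PI/2) < t < PI/2 -> 0 < dxpar t.
Proof.
  intros Ht; pose proof (cos_theta_gt_0 t).
  assert (- (PI/2) < theta t < PI/2) by apply asin_bound_lt, r_sin_bound.
  assert (0 < sin (2/3 * (PI - theta t))) by (apply sin_gt_0; lra).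
  assert (0 < cos t) by (apply cos_gt_0; lra).
  unfold dxpar; apply Rmult_lt_0_compat; [nra|].
  apply Rdiv_lt_0_compat; nra.
Qed.

Lemma xpar_increasing u v : -(PI/2) <= u -> u < v -> v <= PI/2 -> xpar u < xpar v.
Proof.
  intros Hu Huv Hv.
  destruct (MVT_cor2 xpar dxpar u v Huv) as [c [Hmvt Hc]].
  - intros c _; apply is_derive_Reals, is_derive_xpar.
  - pose proof (dxpar_gt_0 c ltac:(lra)); nra.
Qed.

Lemma cubic_xpar psi t : r ^ 2 = (psi + 2) / 4 -> cubic psi (xpar t) = 16 * r ^ 2 * cos t ^ 2.
Proof.
  intros Hpsi.
  assert (H3 : cos (3 * (2/3 * (PI - theta t))) = 1 - 2 * (r * sin t) ^ 2).
  { replace (3 * (2/3 * (PI - theta t))) with (2 * PI - 2 * theta t) by field.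
    rewrite cos_minus, cos_2PI, sin_2PI, cos_2a_sin, sin_theta; ring. }
  rewrite cos_3mul in H3.
  pose proof (sin2_cos2 t) as Hpyth; unfold Rsqr in Hpyth.
  unfold cubic, xpar; replace psi with (4 * r ^ 2 - 2) by lra.
  apply (eq_of_sub_mul_zero _ _ (- 16 * r ^ 2) (sin t * sin t + cos t * cos t - 1)); [lra|].
  transitivity (8 * (4 * cos (2/3 * (PI - theta t)) ^ 3 - 3 * cos (2/3 * (PI - theta t)))
    - 8 * (1 - 2 * (r * sin t) ^ 2) - 16 * r ^ 2 * (sin t * sin t + cos t * cos t - 1)); [ring|].
  rewrite H3; ring.
Qed.

Lemma sqrt_cubic_xpar psi t : r ^ 2 = (psi + 2) / 4 -> -(PI/2) < t < PI/2 ->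
  sqrt (cubic psi (xpar t)) = 4 * r * cos t.
Proof.
  intros Hpsi Ht; assert (0 < cos t) by (apply cos_gt_0; lra).
  rewrite cubic_xpar by assumption.
  replace (16 * r ^ 2 * cos t ^ 2) with ((4 * r * cos t) * (4 * r * cos t)) by ring.
  apply sqrt_square; nra.
Qed.

Lemma sin_mul_pi_sub_theta_div k t : k * k <= 3 -> k <> 0 ->
  sin (k * (PI - theta t)) / cos (theta t) =
  sin (k * PI) * cosF k (r ^ 2 * sin t ^ 2) + cos (k * PI) * (sin (k * (0 - theta t)) / cos (theta t)).
Proof.
  intros Hk Hk0; pose proof (cos_theta_gt_0 t).
  assert (- (PI/2) < theta t < PI/2) by apply asin_bound_lt, r_sin_bound.
  rewrite <- Rpow_mult_distr, <- sin_theta, Rminus_0_l, !Rmult_minus_distr_l, sin_minus,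
    Ropp_mult_distr_r_reverse, sin_neg, cos_mul_cosF by assumption.
  field; apply Rgt_not_eq, H.
Qed.

Lemma is_RInt_sin_mul_pi_sub_theta k : k * k <= 3 -> k <> 0 ->
  is_RInt (fun t => sin (k * (PI - theta t)) / cos (theta t)) (-(PI/2)) (PI/2)
    (sin (k * PI) * RInt (fun t => cosF k (r ^ 2 * sin t ^ 2)) (-(PI/2)) (PI/2)).
Proof.
  intros Hk Hk0.
  set (C := fun t => cosF k (r ^ 2 * sin t ^ 2)).
  set (O := fun t => sin (k * (0 - theta t)) / cos (theta t)).
  assert (HC : is_RInt C (-(PI/2)) (PI/2) (RInt C (-(PI/2)) (PI/2))).
  { apply (RInt_correct (V := R_CompleteNormedModule)), (ex_RInt_continuous (V := R_CompleteNormedModule)).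
    intros; apply continuous_cosF_mul_sin_sqr; [exact Hk|nra]. }
  assert (HO : is_RInt O (-(PI/2)) (PI/2) 0).
  { apply is_RInt_odd; [intro; apply continuous_sin_mul_div_cos_theta|].
    intro t; unfold O; rewrite theta_opp, cos_neg.
    replace (k * (0 - - theta t)) with (- (k * (0 - theta t))) by ring.
    rewrite sin_neg; unfold Rdiv; ring. }
  replace (sin (k * PI) * RInt C (-(PI/2)) (PI/2))
    with (plus (scal (sin (k * PI)) (RInt C (-(PI/2)) (PI/2))) (scal (cos (k * PI)) 0))
    by (unfold plus, scal; simpl; unfold mult; simpl; ring).
  apply (is_RInt_ext (fun t => plus (scal (sin (k * PI)) (C t)) (scal (cos (k * PI)) (O t)))).
  - intros t _; rewrite sin_mul_pi_sub_theta_div by assumption; reflexivity.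
  - exact (is_RInt_plus _ _ _ _ _ _ (is_RInt_scal _ _ _ _ _ HC) (is_RInt_scal _ _ _ _ _ HO)).
Qed.

End OvalParametrisation.

Lemma cubic_factor psi a b x : a <> b -> cubic psi a = 0 -> cubic psi b = 0 ->
  cubic psi x = 4 * (x - a) * (x - b) * (x + a + b).
Proof.
  unfold cubic; intros Hab Ha Hb.
  (* subtracting the two root equations leaves [(a - b) (a^2 + a b + b^2 - 3) = 0] *)
  assert (Hsum : a * a + a * b + b * b - 3 = 0).
  { assert (Hprod : (a - b) * (a * a + a * b + b * b - 3) = 0) by nra.
    destruct (Rmult_integral _ _ Hprod); [lra|assumption]. }
  assert (Hpsi : psi = 3 * a - a ^ 3) by nra.
  subst psi; apply Rminus_diag_uniq.
  transitivity (4 * (x - a) * (a * a + a * b + b * b - 3)); [ring|rewrite Hsum; ring].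
Qed.

Lemma cubic_pos_between_roots_unique psi a b e1 e2 :
  a < b -> cubic psi a = 0 -> cubic psi b = 0 -> (forall x, a < x < b -> cubic psi x > 0) ->
  e1 < e2 -> cubic psi e1 = 0 -> cubic psi e2 = 0 -> (forall x, e1 < x < e2 -> cubic psi x > 0) ->
  e1 = a /\ e2 = b.
Proof.
  intros Hab Ha Hb Hpos H12 H1 H2 Hpos'.
  set (c := - (a + b)).
  assert (F : forall x, cubic psi x = 4 * (x - a) * (x - b) * (x - c)).
  { intro x; rewrite (cubic_factor psi a b x) by (lra || assumption); unfold c; ring. }
  (* the third root [c] cannot lie below [b], or the cubic would change sign on [(a, b)] *)
  assert (Hc : b <= c).
  { apply Rnot_lt_le; intro Hcb.
    set (x := (Rmax a c + b) / 2).
    assert (a <= Rmax a c /\ c <= Rmax a c /\ Rmax a c < b)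
      by (unfold Rmax; destruct Rle_dec; lra).
    specialize (Hpos x ltac:(unfold x; lra)); rewrite F in Hpos.
    assert (0 < (x - a) * (x - c)) by (apply Rmult_lt_0_compat; unfold x; lra).
    assert (x - b < 0) by (unfold x; lra).
    nra. }
  assert (Hroots : forall e, cubic psi e = 0 -> e = a \/ e = b \/ e = c).
  { intros e He; rewrite F in He.
    repeat match type of He with _ * _ = 0 => apply Rmult_integral in He; destruct He as [He|He] end;
      lra. }
  destruct (Hroots e1 H1) as [-> | [-> | ->]], (Hroots e2 H2) as [-> | [-> | ->]]; try lra.
  - split; [reflexivity|].
    destruct (Req_dec c b) as [|Hcb]; [auto|].
    specialize (Hpos' b ltac:(lra)); lra.
  - exfalso; set (x := (b + c) / 2).
    specialize (Hpos' x ltac:(unfold x; lra)); rewrite F in Hpos'.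
    assert (0 < (x - a) * (x - b)) by (apply Rmult_lt_0_compat; unfold x; lra).
    assert (x - c < 0) by (unfold x; lra).
    nra.
Qed.

Lemma sin_2PI3 : sin (2/3 * PI) = sqrt 3 / 2.
Proof. replace (2/3 * PI) with (PI - PI/3) by field; rewrite sin_PI_x; apply sin_PI3. Qed.

Lemma sin_4PI3 : sin (4/3 * PI) = - (sqrt 3 / 2).
Proof. replace (4/3 * PI) with (PI/3 + PI) by field; rewrite neg_sin, sin_PI3; reflexivity. Qed.

Lemma two_thirds_sqrt3_half : 2/3 * (sqrt 3 / 2) = / sqrt 3.
Proof.
  assert (H3 : sqrt 3 * sqrt 3 = 3) by (apply sqrt_sqrt; lra).
  assert (0 < sqrt 3) by (apply sqrt_lt_R0; lra).
  apply (Rmult_eq_reg_l (sqrt 3)); [|lra].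
  rewrite Rinv_r by lra.
  transitivity (sqrt 3 * sqrt 3 / 3); [field|rewrite H3; field].
Qed.

Section Periods.

Variables (psi r : R).
Hypothesis Hr : 0 < r < 1.
Hypothesis Hr2 : r ^ 2 = (psi + 2) / 4.

Let cubic_xpar_gt_0 t : -(PI/2) < t < PI/2 -> 0 < cubic psi (xpar r t).
Proof.
  intros Ht; assert (0 < cos t) by (apply cos_gt_0; lra).
  rewrite cubic_xpar by assumption.
  apply Rmult_lt_0_compat; [|apply pow_lt; lra].
  apply Rmult_lt_0_compat; [lra|apply pow_lt; lra].
Qed.

Lemma oval_endpoints e1 e2 : e1 < e2 -> cubic psi e1 = 0 -> cubic psi e2 = 0 ->
  (forall x, e1 < x < e2 -> cubic psi x > 0) ->
  e1 = xpar r (-(PI/2)) /\ e2 = xpar r (PI/2).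
Proof.
  pose proof PI_RGT_0.
  assert (Hcont : forall t, continuous (xpar r) t)
    by (intro t; apply continuous_of_ex_derive; eexists; apply is_derive_xpar, Hr).
  apply cubic_pos_between_roots_unique.
  - apply xpar_increasing; lra.
  - rewrite cubic_xpar, cos_neg, cos_PI2 by assumption; ring.
  - rewrite cubic_xpar, cos_PI2 by assumption; ring.
  - intros x Hx.
    destruct (IVT_incr_open (xpar r) (-(PI/2)) (PI/2) x Hcont ltac:(lra) Hx) as [t [Ht <-]].
    apply cubic_xpar_gt_0, Ht.
Qed.

Lemma improper_int_xpar (f h : R -> R) :
  (forall x, 0 < cubic psi x -> continuous f x) -> (forall t, continuous h t) ->
  (forall t, -(PI/2) < t < PI/2 -> dxpar r t * f (xpar r t) = h t) ->
  improper_int f (xpar r (-(PI/2))) (xpar r (PI/2)) (RInt h (-(PI/2)) (PI/2)).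
Proof.
  intros Hf Hh Hfh; pose proof PI_RGT_0.
  apply (improper_int_comp f (xpar r) (dxpar r) h); try assumption.
  - lra.
  - intro t; apply is_derive_xpar, Hr.
  - intro t; apply continuous_dxpar, Hr.
  - intros u v Hu Huv Hv; apply xpar_increasing; assumption.
  - intros t Ht; apply Hf, cubic_xpar_gt_0, Ht.
Qed.

Lemma improper_int_xpar_cosF k (g : R -> R) : k * k <= 3 -> k <> 0 ->
  (forall x, 0 < cubic psi x -> continuous g x) ->
  (forall t, -(PI/2) < t < PI/2 ->
     dxpar r t * g (xpar r t) = 2/3 * (sin (k * (PI - theta r t)) / cos (theta r t))) ->
  improper_int g (xpar r (-(PI/2))) (xpar r (PI/2))
    (2/3 * sin (k * PI) * RInt (fun t => cosF k (r ^ 2 * sin t ^ 2)) (-(PI/2)) (PI/2)).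
Proof.
  intros Hk Hk0 Hg Hgh.
  set (h := fun t => 2/3 * (sin (k * (PI - theta r t)) / cos (theta r t))).
  replace (2/3 * sin (k * PI) * _) with (RInt h (-(PI/2)) (PI/2)).
  - apply improper_int_xpar; [exact Hg| |].
    + intro t; apply (continuous_scal_r (V := R_NormedModule) (2/3) _ t).
      apply continuous_sin_mul_div_cos_theta, Hr.
    + exact Hgh.
  - apply is_RInt_unique.
    pose proof (is_RInt_scal _ _ _ (2/3) _ (is_RInt_sin_mul_pi_sub_theta r Hr k Hk Hk0)) as Hh.
    rewrite Rmult_assoc; exact Hh.
Qed.


Lemma improper_int_dx_over_y :
  improper_int (fun x => 2 / sqrt (cubic psi x)) (xpar r (-(PI/2))) (xpar r (PI/2))
    (RInt (fun t => cosF (2/3) (r ^ 2 * sin t ^ 2)) (-(PI/2)) (PI/2) / sqrt 3).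
Proof.
  replace (_ / sqrt 3) with
    (2/3 * sin (2/3 * PI) * RInt (fun t => cosF (2/3) (r ^ 2 * sin t ^ 2)) (-(PI/2)) (PI/2))
    by (rewrite sin_2PI3, two_thirds_sqrt3_half; unfold Rdiv; ring).
  apply improper_int_xpar_cosF; [lra|lra| |].
  - intros x Hx; apply continuous_of_ex_derive; unfold cubic in *; auto_derive.
    repeat split; [lra|apply Rgt_not_eq, sqrt_lt_R0; lra].
  - intros t Ht; pose proof (cos_theta_gt_0 r Hr t).
    assert (0 < cos t) by (apply cos_gt_0; lra).
    unfold dxpar; rewrite sqrt_cubic_xpar by assumption.
    field; repeat split; apply Rgt_not_eq; lra.
Qed.

Lemma improper_int_x_dx_over_y :
  improper_int (fun x => 2 * x / sqrt (cubic psi x)) (xpar r (-(PI/2))) (xpar r (PI/2))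
    (- (RInt (fun t => cosF (4/3) (r ^ 2 * sin t ^ 2)) (-(PI/2)) (PI/2) / sqrt 3)).
Proof.
  replace (- (_ / sqrt 3)) with
    (2/3 * sin (4/3 * PI) * RInt (fun t => cosF (4/3) (r ^ 2 * sin t ^ 2)) (-(PI/2)) (PI/2))
    by (rewrite sin_4PI3, Ropp_mult_distr_r_reverse, two_thirds_sqrt3_half; unfold Rdiv; ring).
  apply improper_int_xpar_cosF; [lra|lra| |].
  - intros x Hx; apply continuous_of_ex_derive; unfold cubic in *; auto_derive.
    repeat split; [lra|apply Rgt_not_eq, sqrt_lt_R0; lra].
  - intros t Ht; pose proof (cos_theta_gt_0 r Hr t).
    assert (0 < cos t) by (apply cos_gt_0; lra).
    unfold dxpar; rewrite sqrt_cubic_xpar by assumption; unfold xpar.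
    replace (4/3 * (PI - theta r t)) with (2 * (2/3 * (PI - theta r t))) by field.
    rewrite sin_2a; field; repeat split; apply Rgt_not_eq; lra.
Qed.

End Periods.

Theorem mainTheorem12 (psi e1 e2 : R) :
  -2 < psi < 2 ->
  e1 < e2 -> cubic psi e1 = 0 -> cubic psi e2 = 0 ->
  (forall x, e1 < x < e2 -> cubic psi x > 0) ->
  exists S1 S2 : R,
    hyp2F1 (1/6) (5/6) 1 ((psi + 2) / 4) S1 /\
    hyp2F1 (-1/6) (7/6) 1 ((psi + 2) / 4) S2 /\
    improper_int (fun x => 2 / sqrt (cubic psi x)) e1 e2 (PI / sqrt 3 * S1) /\
    improper_int (fun x => 2 * x / sqrt (cubic psi x)) e1 e2 (- (PI / sqrt 3 * S2)).
Proof.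
  intros Hpsi H12 He1 He2 Hpos.
  set (r := sqrt ((psi + 2) / 4)).
  assert (Hr2 : r ^ 2 = (psi + 2) / 4) by (unfold r; rewrite <- Rsqr_pow2; apply Rsqr_sqrt; lra).
  assert (Hr : 0 < r < 1).
  { unfold r; rewrite <- sqrt_1; split; [apply sqrt_lt_R0|apply sqrt_lt_1_alt]; lra. }
  destruct (oval_endpoints psi r Hr Hr2 e1 e2 H12 He1 He2 Hpos) as [-> ->].
  set (I k := RInt (fun t => cosF k (r ^ 2 * sin t ^ 2)) (-(PI/2)) (PI/2)).
  exists (I (2/3) / PI), (I (4/3) / PI).
  pose proof PI_RGT_0; assert (0 < sqrt 3) by (apply sqrt_lt_R0; lra).
  assert (Hz : 0 <= r ^ 2 < 1) by (split; nra).
  rewrite <- Hr2; split; [|split; [|split]].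
  - replace (1/6) with ((1 - 2/3) / 2) by field; replace (5/6) with ((1 + 2/3) / 2) by field.
    apply hyp2F1_RInt_cosF; [lra|exact Hz].
  - replace (-1/6) with ((1 - 4/3) / 2) by field; replace (7/6) with ((1 + 4/3) / 2) by field.
    apply hyp2F1_RInt_cosF; [lra|exact Hz].
  - replace (PI / sqrt 3 * (I (2/3) / PI)) with (I (2/3) / sqrt 3) by (field; lra).
    apply improper_int_dx_over_y; assumption.
  - replace (- (PI / sqrt 3 * (I (4/3) / PI))) with (- (I (4/3) / sqrt 3)) by (field; lra).
    apply improper_int_x_dx_over_y; assumption.
Qed.
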